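(* Let $\mathcal{A}$ be a separating union-closed family with base set $[n]$ and height $h=4$, and suppose $|\mathcal{B}(\mathcal{A})|=4$. Then $|B|=n$, where $B=b(\mathcal{A}_{<n/2})$.
   Context: A family of sets $\mathcal{A}$ is union-closed if it is a finite family of distinct finite sets with at least one nonempty member set, and $X,Y\in\mathcal{A}$ implies $X\cup Y\in\mathcal{A}$ (the empty set may be a member). For a family $\mathcal{F}$, $b(\mathcal{F})=\bigcup_{F\in\mathcal{F}}F$; the base set $b(\mathcal{A})$ is denoted $[n]=\{1,\dots,n\}$. $\mathcal{A}$ is separating if for any two distinct $x,y\in[n]$ there is $A\in\mathcal{A}$ containing exactly one of $x,y$. A chain in $\mathcal{A}$ is a subfamily any two distinct members of which are comparable under proper inclusion; the height $h$ of $\mathcal{A}$ is the maximum size of a chain in $\mathcal{A}$. For real $x\ge 0$, $\mathcal{A}_{<x}=\{A\in\mathcal{A} : |A|<x\}$. For $\mathcal{S}\subseteq\mathcal{A}$ and $S\in\mathcal{S}$, $\mathrm{irr}_{\mathcal{S}}(S)=\{s\in S : s\notin b(\mathcal{S}\setminus\{S\})\}$, and $\mathcal{S}$ is irredundant if $\mathrm{irr}_{\mathcal{S}}(S)\neq\emptyset$ for every $S\in\mathcal{S}$. With $B=b(\mathcal{A}_{<n/2})$, $\mathcal{B}(\mathcal{A})$ denotes any irredundant subfamily of $\mathcal{A}_{<n/2}$ of minimum size such that $b(\mathcal{B}(\mathcal{A}))=B$. *)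

From mathcomp Require Import all_boot.
Set Implicit Arguments. Unset Strict Implicit. Unset Printing Implicit Defensive.

Section Defs.
Variable n : nat.
Local Notation fam := {set {set 'I_n}}.

Definition bunion (F : fam) : {set 'I_n} := \bigcup_(X in F) X.

Definition union_closed (A : fam) : Prop :=
  (exists2 X, X \in A & X != set0) /\
  (forall X Y, X \in A -> Y \in A -> X :|: Y \in A).

Definition separating (A : fam) : Prop :=
  forall x y : 'I_n, x != y ->
    exists2 X, X \in A & (x \in X) != (y \in X).

Definition chain (C : fam) : bool :=
  [forall X in C, forall Y in C, (X != Y) ==> ((X \proper Y) || (Y \proper X))].

Definition height (A : fam) : nat :=
  \max_(C : fam | chain C && (C \subset A)) #|C|.

(* A_{<x} for x = n/2 : members X with |X| < n/2, i.e. 2|X| < n *)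
Definition small_half (A : fam) : fam := [set X in A | (#|X|).*2 < n].

Definition irr (S : fam) (X : {set 'I_n}) : {set 'I_n} :=
  X :\: bunion (S :\ X).

Definition irredundant (S : fam) : Prop :=
  forall X, X \in S -> irr S X != set0.

Definition is_BA (A S : fam) : Prop :=
  [/\ S \subset small_half A, irredundant S,
      bunion S = bunion (small_half A) &
      forall S' : fam, S' \subset small_half A -> irredundant S' ->
        bunion S' = bunion (small_half A) -> #|S| <= #|S'| ].

End Defs.

From mathcomp Require Import all_boot.
Set Implicit Arguments. Unset Strict Implicit. Unset Printing Implicit Defensive.

(* Listing the members X_1, ..., X_k of an irredundant family S, the partial
   unions X_1 ∪ ... ∪ X_i strictly increase, since X_i contains a point of
   irr_S(X_i), which lies in no other member.  In a union-closed family they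
   form a chain of size k = |S| ending at b(S).  If b(S) = B = b(A_{<n/2}) were
   a proper subset of [n] = b(A), which is itself a member of A, adding [n] on
   top would give a chain of size |S| + 1 = 5 > h. *)

Section Families.
Variable n : nat.
Local Notation fam := {set {set 'I_n}}.

Lemma bunionS (S1 S2 : fam) : S1 \subset S2 -> bunion S1 \subset bunion S2.
Proof.
move=> /subsetP sS12; apply/bigcupsP => X XS1.
exact: bigcup_sup (sS12 X XS1).
Qed.

Lemma bunion0 : bunion (set0 : fam) = set0.
Proof. exact: big_set0. Qed.

Lemma bunionD1 (S : fam) X : X \in S -> bunion S = X :|: bunion (S :\ X).
Proof. exact: big_setD1. Qed.

Lemma irredundantD1 (S : fam) X : irredundant S -> irredundant (S :\ X).
Proof.
move=> irrS Y /setD1P[_ YS]; have [y yY] := set0Pn _ (irrS Y YS).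
apply/set0Pn; exists y; apply: subsetP yY; rewrite setDS // bunionS //.
by apply/subsetP => Z /setD1P[ZY /setD1P[_ ZS]]; rewrite !inE ZY.
Qed.

Lemma proper_bunionD1 (S : fam) X :
  irredundant S -> X \in S -> bunion (S :\ X) \proper bunion S.
Proof.
move=> irrS XS; have [x] := set0Pn _ (irrS X XS).
rewrite inE => /andP[xSX xX].
rewrite properEneq {2}(bunionD1 XS) subsetUr andbT.
by apply: contraNneq xSX => ->; rewrite (bunionD1 XS) inE xX.
Qed.

Lemma chainU1 (C : fam) (Y : {set 'I_n}) :
  chain C -> {in C, forall X : {set 'I_n}, X \proper Y} -> chain (Y |: C).
Proof.
move=> /forallP chC ltCY; apply/forallP => X; apply/implyP => /setU1P XYC.
apply/forallP => Z; apply/implyP => /setU1P ZYC.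
case: XYC ZYC => [-> | XC] [-> | ZC].
- by rewrite eqxx.
- by rewrite ltCY ?orbT ?implybT.
- by rewrite ltCY ?implybT.
- exact: (forall_inP (implyP (chC X) XC) Z ZC).
Qed.

Lemma card_chainU1 (C : fam) (Y : {set 'I_n}) :
  {in C, forall X : {set 'I_n}, X \proper Y} -> #|Y |: C| = #|C|.+1.
Proof.
move=> ltCY; rewrite cardsU1; case: (boolP (Y \in C)) => // /ltCY.
by rewrite properxx.
Qed.

Lemma chain_leq_height (A C : fam) : chain C -> C \subset A -> #|C| <= height A.
Proof.
move=> chC sCA.
by apply: (@leq_bigmax_cond _ (fun C : fam => chain C && (C \subset A))); rewrite chC.
Qed.

Variable A : fam.
Hypothesis A_closed : forall X Y, X \in A -> Y \in A -> X :|: Y \in A.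

Lemma bunion_mem (S : fam) : S \subset A -> S != set0 -> bunion S \in A.
Proof.
have [m] := ubnP #|S|; elim: m S => // m IH S ltSm sSA /set0Pn[X XS].
have XA := subsetP sSA X XS.
rewrite (bunionD1 XS); have [->|neS'] := eqVneq (S :\ X) set0.
  by rewrite bunion0 setU0.
have ltS' : #|S :\ X| < m := leq_trans (proper_card (properD1 XS)) ltSm.
exact: A_closed XA (IH _ ltS' (subset_trans (subsetDl _ _) sSA) neS').
Qed.

Lemma irredundant_chain (S : fam) :
  S \subset A -> irredundant S ->
  exists C : fam,
    [/\ chain C, C \subset A, #|C| = #|S|
       & {in C, forall X : {set 'I_n}, X \subset bunion S}].
Proof.
have [m] := ubnP #|S|; elim: m S => // m IH S ltSm sSA irrS.
have [-> | /set0Pn[X XS]] := eqVneq S set0.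
  exists set0; split; rewrite ?sub0set ?cards0 //; last by move=> ?; rewrite inE.
  by apply/forall_inP => ?; rewrite inE.
have sS'A : S :\ X \subset A := subset_trans (subsetDl _ _) sSA.
have ltS' : #|S :\ X| < m := leq_trans (proper_card (properD1 XS)) ltSm.
have [C [chC sCA cardC sCS']] := IH _ ltS' sS'A (irredundantD1 irrS).
have ltCS : {in C, forall Y : {set 'I_n}, Y \proper bunion S}.
  by move=> Y YC; exact: sub_proper_trans (sCS' Y YC) (proper_bunionD1 irrS XS).
exists (bunion S |: C); split.
- exact: chainU1.
- by rewrite subUset sub1set bunion_mem //; apply/set0Pn; exists X.
- by rewrite card_chainU1 // cardC (cardsD1 X S) XS.
- by move=> Y /setU1P[-> // | /ltCS /proper_sub].
Qed.

Lemma irredundant_lt_height (S : fam) :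
  S \subset A -> irredundant S -> bunion S \proper bunion A -> #|S| < height A.
Proof.
move=> sSA irrS ltSA; have [C [chC sCA <- sCS]] := irredundant_chain sSA irrS.
have ltCA : {in C, forall Y : {set 'I_n}, Y \proper bunion A}.
  by move=> Y YC; exact: sub_proper_trans (sCS Y YC) ltSA.
rewrite -(card_chainU1 ltCA) chain_leq_height ?chainU1 //.
rewrite subUset sCA sub1set andbT bunion_mem //.
by apply: contraTneq ltSA => ->; rewrite bunion0 properE sub0set andbF.
Qed.

End Families.

Lemma small_half_sub n (A : {set {set 'I_n}}) : small_half A \subset A.
Proof. by apply/subsetP => X; rewrite inE => /andP[]. Qed.

Theorem propositionJ (n : nat) (A : {set {set 'I_n}}) :
  union_closed A ->
  separating A ->
  bunion A = [set: 'I_n] ->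
  height A = 4 ->
  (exists S, is_BA A S /\ #|S| = 4) ->
  #|bunion (small_half A)| = n.
Proof.
move=> [_ A_closed] _ bA hA [S [[sSA irrS bS _] cardS]].
suff -> : bunion (small_half A) = [set: 'I_n] by rewrite cardsT card_ord.
apply/eqP/contraT => neB.
have ltSA : bunion S \proper bunion A by rewrite bS bA properT.
have := irredundant_lt_height A_closed (subset_trans sSA (small_half_sub A)) irrS ltSA.
by rewrite cardS hA ltnn.
Qed.
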